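(* Let $G=(V,\Sigma,R,S)$ be a context-free grammar in Greibach Normal Form. For all $t,u\in\Sigma^*$: if $D_G(t)=D_G(u)$, then $t\equiv_{L(G)}u$.
   Context: A context-free grammar $G=(V,\Sigma,R,S)$ in Greibach Normal Form has every production of the form $S\to\epsilon$ or $A\to a\,\beta$ with $a\in\Sigma$, $\beta\in(V\setminus\{S\})^*$; $L(G)$ is its language. Let $\delta_G(a,A)=\{\beta\in V^*:(A\to a\,\beta)\in R\}$. Define $\pi:\Sigma^*\times V^*\to\mathcal{P}(V^* )$ recursively by $\pi(t,\alpha)=\{\alpha\}$ if $t=\epsilon$; $\pi(t,\alpha)=\emptyset$ if $t\neq\epsilon$ and $\alpha=\epsilon$; and otherwise $\pi(t,\alpha)=\bigcup_{\beta\in\delta_G(t_0,\alpha_0)}\pi(t_{1:},\beta\alpha_{1:})$, where $t_0$ is the first character of $t$, $t_{1:}$ the rest of $t$, $\alpha_0$ the first symbol of $\alpha$ and $\alpha_{1:}$ the rest of $\alpha$. The pre-displacement of $t\in\Sigma^*$ is $D_G(t)=\{(\alpha,\beta):\alpha\in V^*,\ \beta\in\pi(t,\alpha)\}$. Syntactic congruence: $t\equiv_{L(G)}u$ iff for all $w,z\in\Sigma^*$, $wtz\in L(G)\leftrightarrow wuz\in L(G)$. *)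

From mathcomp Require Import all_boot.
From Stdlib Require Import Relations.
Set Implicit Arguments. Unset Strict Implicit. Unset Printing Implicit Defensive.

(* A rule A -> gamma with gamma a string over
   V + Sigma (nonterminals are [inl], terminals are [inr]). *)
Record cfg (V Sigma : finType) := CFG {
  start : V;
  rules : seq (V * seq (V + Sigma))
}.

Section Grammar.
Variables (V Sigma : finType) (G : cfg V Sigma).

Inductive step : seq (V + Sigma) -> seq (V + Sigma) -> Prop :=
| Step (x y : seq (V + Sigma)) (A : V) (g : seq (V + Sigma)) :
    (A, g) \in rules G -> step (x ++ inl A :: y) (x ++ g ++ y).

Definition derives := clos_refl_trans _ step.

Definition lang (w : seq Sigma) : Prop :=
  derives [:: inl (start G)] (map inr w).

Definition GNF : Prop :=
  forall r, r \in rules G ->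
    (r = (start G, [::])) \/
    exists (a : Sigma) (beta : seq V),
      r.2 = inr a :: map inl beta /\ start G \notin beta.

Definition delta (a : Sigma) (A : V) (beta : seq V) : Prop :=
  (A, inr a :: map inl beta) \in rules G.

Fixpoint pi (t : seq Sigma) (alpha : seq V) : seq V -> Prop :=
  match t with
  | [::] => fun g => g = alpha
  | a :: t' =>
      match alpha with
      | [::] => fun _ => False
      | A :: alpha' => fun g => exists beta, delta a A beta /\ pi t' (beta ++ alpha') g
      end
  end.

Definition predisp (t : seq Sigma) : seq V * seq V -> Prop :=
  fun p => pi t p.1 p.2.

End Grammar.

Definition synt_cong (Sigma : Type) (L : seq Sigma -> Prop) (t u : seq Sigma) : Prop :=
  forall w z : seq Sigma, L (w ++ t ++ z) <-> L (w ++ u ++ z).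

From Pilot Require Import Defs.
From mathcomp Require Import all_boot.
From Stdlib Require Import Relations Setoid.
Set Implicit Arguments. Unset Strict Implicit. Unset Printing Implicit Defensive.

(* In Greibach Normal Form a derivation of a terminal word w from S is, read
   leftmost, a run of a pushdown automaton whose stack holds nonterminals and
   which reads one letter per rule: w is in L(G) iff w is empty and S -> eps
   is a rule, or pi(w, S) contains the empty stack (S never reappears, so
   S -> eps cannot fire later).  Since pi(x y, alpha) = pi(y, pi(x, alpha)),
   pi(w t z, .) is determined by the relation D_G(t), hence so is membership
   of w t z in L(G); the empty-word case is covered too, since w t z is empty
   iff eps is in pi(w t z, eps). *)

Section Derivations.
Variables (V Sigma : finType) (G : cfg V Sigma).
Local Notation pi := (Defs.pi G).

(* Derivation trees: unlike [derives], they forget the order of the steps. *)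
Inductive produces : seq (V + Sigma) -> seq Sigma -> Prop :=
| produces_nil : produces [::] [::]
| produces_term a s w : produces s w -> produces (inr a :: s) (a :: w)
| produces_rule A g s w1 w2 : (A, g) \in rules G -> produces g w1 ->
    produces s w2 -> produces (inl A :: s) (w1 ++ w2).

Lemma produces_cat x y w1 w2 :
  produces x w1 -> produces y w2 -> produces (x ++ y) (w1 ++ w2).
Proof.
elim=> [|a s w _ IH|A g s v1 v2 Hr Hg _ _ IH] Hy //=.
- by constructor; apply: IH.
- by rewrite -catA; apply: produces_rule Hr Hg _; apply: IH.
Qed.

Lemma produces_catP x y w : produces (x ++ y) w ->
  exists w1 w2, [/\ w = w1 ++ w2, produces x w1 & produces y w2].
Proof.
elim: x w => [|c x IH] w /= H; first by exists [::], w; split=> //; constructor.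
inversion H as [|a s v Hs|A g s v1 v2 Hr Hg Hs]; subst.
- have [w1 [w2 [-> Hx Hy]]] := IH _ Hs.
  by exists (a :: w1), w2; split=> //; constructor.
- have [w1 [w2 [-> Hx Hy]]] := IH _ Hs.
  exists (v1 ++ w1), w2; split=> //; first by rewrite catA.
  exact: produces_rule Hr Hg Hx.
Qed.

Lemma produces_terminals w : produces (map inr w) w.
Proof. by elim: w => [|a w IH]; constructor. Qed.

Lemma step_produces x y w : step G x y -> produces y w -> produces x w.
Proof.
case=> p q A g Hr /produces_catP [w1 [r [-> H1 /produces_catP [w2 [w3 [-> H2 H3]]]]]].
by apply: produces_cat H1 _; apply: produces_rule Hr H2 H3.
Qed.

Lemma derives_ctx p q x y :
  derives G x y -> derives G (p ++ x ++ q) (p ++ y ++ q).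
Proof.
elim=> [_ _ [x' y' A g Hr]|x'|x' y' z' _ IHxy _ IHyz].
- apply: rt_step; have := Step (p ++ x') (y' ++ q) Hr.
  by rewrite -!catA.
- exact: rt_refl.
- exact: rt_trans IHxy IHyz.
Qed.

Lemma produces_derives s w : produces s w -> derives G s (map inr w).
Proof.
elim=> [|a s' w' _ IH|A g s' w1 w2 Hr _ IHg _ IHs].
- exact: rt_refl.
- by have := derives_ctx [:: inr a] [::] IH; rewrite !cats0.
- apply: rt_trans (_ : derives G _ (g ++ s')) _.
    by apply: rt_step; apply: (Step [::]).
  apply: rt_trans (derives_ctx [::] s' IHg) _.
  by rewrite map_cat; have := derives_ctx (map inr w1) [::] IHs; rewrite !cats0.
Qed.

Lemma derives_terminalsP s w : derives G s (map inr w) <-> produces s w.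
Proof.
split; last exact: produces_derives.
move=> H; apply clos_rt_rt1n in H; move Ew: (map inr w) H => t H.
elim: H Ew => [_ <-|x y z Hs _ IH Ew]; first exact: produces_terminals.
exact: step_produces Hs (IH Ew).
Qed.

Lemma pi_cat x y alpha gamma :
  pi (x ++ y) alpha gamma <-> exists beta, pi x alpha beta /\ pi y beta gamma.
Proof.
elim: x alpha => [|a x IH] alpha /=; first by split=> [H|[b [-> H]]] //; exists alpha.
case: alpha => [|A alpha] /=; first by split=> [[]|[b [[] _]]].
split.
- by move=> [be [Hd /IH [b [H1 H2]]]]; exists b; split=> //; exists be.
- by move=> [b [[be [Hd H1]] H2]]; exists be; split=> //; apply/IH; exists b.
Qed.

Lemma pi_nil_nil t : pi t [::] [::] <-> t = [::].
Proof. by case: t. Qed.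

Lemma pi_congr t u : (forall alpha gamma, pi t alpha gamma <-> pi u alpha gamma) ->
  forall w z alpha gamma, pi (w ++ t ++ z) alpha gamma <-> pi (w ++ u ++ z) alpha gamma.
Proof.
move=> Etu w z alpha gamma.
by split=> /pi_cat [b [Hw /pi_cat [c [/Etu Ht Hz]]]];
  apply/pi_cat; exists b; split=> //; apply/pi_cat; exists c.
Qed.

Lemma pi_produces w alpha : pi w alpha [::] -> produces (map inl alpha) w.
Proof.
elim: w alpha => [|a w IH] [|A alpha] //= => [_|[be [Hd /IH]]]; first by constructor.
rewrite map_cat => /produces_catP [w1 [w2 [-> H1 H2]]].
by rewrite -cat_cons; apply: produces_rule Hd _ H2; constructor.
Qed.

Hypothesis HG : GNF G.

(* Induction on the length of w: unfolding the rule for the first nonterminal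
   pushes its right-hand side onto the stack, which is not a subderivation. *)
Lemma produces_pi w alpha : start G \notin alpha ->
  produces (map inl alpha) w -> pi w alpha [::].
Proof.
elim: (size w).+1 {-2}w alpha (ltnSn (size w)) => // n IH {}w [|A alpha] Hw HS H;
  inversion H as [| |B g s w1 w2 Hr Hg Hs]; subst => //=.
rewrite in_cons negb_or in HS; case/andP: HS => HA HS.
case: (HG Hr) => /= [[EA _]|[a [be [Eg Hbe]]]]; first by rewrite EA eqxx in HA.
subst g; inversion Hg; subst.
exists be; split=> //; apply: IH; last by rewrite map_cat; apply: produces_cat.
- by move: Hw; rewrite /= !size_cat.
- by rewrite mem_cat negb_or Hbe.
Qed.

Lemma langP w : lang G w <->
  (w = [::] /\ (start G, [::]) \in rules G) \/ pi w [:: start G] [::].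
Proof.
rewrite /lang derives_terminalsP; split.
- move=> H; inversion H as [| |A g s w1 w2 Hr Hg Hs]; subst.
  inversion Hs; subst; rewrite cats0.
  case: (HG Hr) => /= [[Eg]|[a [be [Eg Hbe]]]]; subst g; inversion Hg; subst.
    by left.
  right; exists be; split=> //; rewrite cats0.
  exact: produces_pi.
- case=> [[-> Hr]|/pi_produces //].
  exact: produces_rule Hr produces_nil produces_nil.
Qed.

End Derivations.

Theorem lemma3 (V Sigma : finType) (G : cfg V Sigma) :
  GNF G ->
  forall t u : seq Sigma, predisp G t = predisp G u -> synt_cong (lang G) t u.
Proof.
move=> HG t u Etu.
have Epi alpha gamma : Defs.pi G t alpha gamma <-> Defs.pi G u alpha gamma.
  by rewrite -/(predisp G t (alpha, gamma)) Etu.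
move=> w z; rewrite !(langP HG) -!(@pi_nil_nil _ _ G).
by rewrite !(pi_congr Epi w z).
Qed.
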